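(* Let $r>0$, let $\widehat\mu:[0,\infty)\to\mathbb R$ and $\sigma:[0,\infty)\to(0,\infty)$ be globally Lipschitz continuous, and suppose there are constants $\kappa>0$ and $c>0$ such that $x\mapsto\widehat\mu(x)-(r-c)x$ is strictly decreasing on $[\kappa,\infty)$. Let $\widehat\psi\in C^2[0,\infty)$ be the increasing solution of $$\frac{\sigma^2(x)}{2}\widehat\psi''(x)+\widehat\mu(x)\widehat\psi'(x)=r\widehat\psi(x),\qquad\widehat\psi'(0)=1,\ \widehat\psi(0)=0.$$ Then: (I) $\widehat\psi'(x)>0$ for all $x\ge0$. (II) There exists a unique point $b_1\in[\kappa,\infty)$ such that $\widehat\psi''(x)<0$ for $x\in(\kappa,b_1)$ and $\widehat\psi''(x)>0$ for $x\in(b_1,\infty)$. (III) $\dfrac{n}{\widehat\psi(n)}\to0$ as $n\to\infty$. *)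

From Stdlib Require Import Reals.
From Coquelicot Require Import Coquelicot.
Open Scope R_scope.

Definition lipschitz_nonneg (f : R -> R) : Prop :=
  exists L : R, forall x y, 0 <= x -> 0 <= y -> Rabs (f x - f y) <= L * Rabs (x - y).

Definition deriv_nonneg (f f' : R -> R) : Prop :=
  forall x, 0 <= x ->
    filterlim (fun y => (f y - f x) / (y - x))
      (within (fun y => 0 <= y /\ y <> x) (locally x)) (locally (f' x)).

Definition cont_nonneg (f : R -> R) : Prop :=
  forall x, 0 <= x ->
    filterlim f (within (fun y => 0 <= y) (locally x)) (locally (f x)).

Definition C2_nonneg (f df ddf : R -> R) : Prop :=
  deriv_nonneg f df /\ deriv_nonneg df ddf /\ cont_nonneg ddf.

(* By the ODE, psi'' has the sign of gap = r psi - mu psi'.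
   (I) At a first zero z of psi' we would have psi(z) > 0, hence psi''(z) > 0, which is
   impossible for a zero reached from above.
   (II) Because mu(x) - (r - c) x decreases on [kappa, oo), at a zero z >= kappa of psi''
   the difference quotients of gap at z are bounded below by a quantity tending to
   c psi'(z) > 0; so psi'' can only cross zero upwards there, and once nonnegative it stays
   positive. It cannot stay negative on [kappa, oo): psi' would then decrease and
   gap(x) >= psi'(x) (c (x - kappa) - mu(kappa)) > 0 for large x.
   (III) On the convex tail, if psi' stayed bounded, gap would grow linearly while sigma grows
   at most linearly, so psi''(x) >= k / x and psi' >= k log x, a contradiction. Hence
   psi' is unbounded and psi is superlinear. *)

From Stdlib Require Import Classical Reals Lra.
From Coquelicot Require Import Coquelicot.
Open Scope R_scope.

Lemma within_locally_R (D P : R -> Prop) x :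
  within D (locally x) P -> exists d, 0 < d /\ forall y, Rabs (y - x) < d -> D y -> P y.
Proof. intros [d Hd]. exists d; split; [apply cond_pos | exact Hd]. Qed.

Section RealLimits.
Context {T : Type} {F : (T -> Prop) -> Prop} {FF : Filter F}.

Lemma filterlim_eventually_pos (h : T -> R) (l : R) :
  filterlim h F (locally l) -> 0 < l -> F (fun y => 0 < h y).
Proof.
  intros Hh hl. apply (Hh (fun u => 0 < u)).
  exists (mkposreal l hl). intros u hu. change (Rabs (u - l) < l) in hu.
  apply Rabs_def2 in hu. lra.
Qed.

Lemma filterlim_Rplus (f g : T -> R) (a b : R) :
  filterlim f F (locally a) -> filterlim g F (locally b) ->
  filterlim (fun y => f y + g y) F (locally (a + b)).
Proof.
  intros Hf Hg. eapply filterlim_comp_2; [exact Hf | exact Hg | exact (filterlim_plus a b)].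
Qed.

Lemma filterlim_Rmult (f g : T -> R) (a b : R) :
  filterlim f F (locally a) -> filterlim g F (locally b) ->
  filterlim (fun y => f y * g y) F (locally (a * b)).
Proof.
  intros Hf Hg.
  eapply filterlim_comp_2; [exact Hf | exact Hg | exact (filterlim_mult (K := R_AbsRing) a b)].
Qed.

Lemma filterlim_Rminus (f g : T -> R) (a b : R) :
  filterlim f F (locally a) -> filterlim g F (locally b) ->
  filterlim (fun y => f y - g y) F (locally (a - b)).
Proof.
  intros Hf Hg. apply filterlim_Rplus; [exact Hf |].
  eapply filterlim_comp; [exact Hg | exact (filterlim_opp b)].
Qed.

End RealLimits.

Lemma deriv_nonneg_is_derive f f' x : deriv_nonneg f f' -> 0 < x -> is_derive f x (f' x).
Proof.
  intros Hd hx. apply is_derive_Reals. intros eps he.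
  destruct (within_locally_R _ _ _
    (proj1 (filterlim_locally _ _) (Hd x (Rlt_le _ _ hx)) (mkposreal eps he))) as [d [hd H]].
  assert (hm : 0 < Rmin d x) by (apply Rmin_pos; lra).
  exists (mkposreal _ hm). intros h hh0 hh. simpl in hh.
  pose proof (Rmin_l d x); pose proof (Rmin_r d x).
  specialize (H (x + h)). replace (x + h - x) with h in H by ring.
  apply H; [lra | split; [apply Rabs_def2 in hh | ]; lra].
Qed.

Lemma deriv_nonneg_cont f f' : deriv_nonneg f f' -> cont_nonneg f.
Proof.
  intros Hd x hx.
  assert (Hlin : filterlim (fun y => y - x)
    (within (fun y => 0 <= y /\ y <> x) (locally x)) (locally (x - x))).
  { apply filterlim_Rminus.
    - apply (filterlim_filter_le_1 _ (filter_le_within _)), filterlim_id.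
    - apply filterlim_const. }
  assert (Hlim := filterlim_Rmult _ _ _ _ (Hd x hx) Hlin).
  rewrite Rminus_eq_0, Rmult_0_r in Hlim.
  apply filterlim_locally. intros eps.
  destruct (within_locally_R _ _ _ (proj1 (filterlim_locally _ _) Hlim eps)) as [d [hd H]].
  exists (mkposreal d hd). intros y hy hy0.
  destruct (Req_dec y x) as [-> | hyx]; [apply ball_center |].
  specialize (H y hy (conj hy0 hyx)). change (Rabs (f y - f x) < eps).
  change (Rabs ((f y - f x) / (y - x) * (y - x) - 0) < eps) in H.
  replace ((f y - f x) / (y - x) * (y - x) - 0) with (f y - f x) in H by (field; lra).
  exact H.
Qed.

Lemma cont_nonneg_continuity_pt f x : cont_nonneg f -> 0 < x -> continuity_pt f x.
Proof.
  intros Hc hx. apply continuity_pt_filterlim. intros P HP.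
  destruct (within_locally_R _ _ _ (Hc x (Rlt_le _ _ hx) P HP)) as [d [hd H]].
  assert (hm : 0 < Rmin d x) by (apply Rmin_pos; lra).
  exists (mkposreal _ hm). intros y hy. change (Rabs (y - x) < Rmin d x) in hy.
  pose proof (Rmin_l d x); pose proof (Rmin_r d x).
  apply H; [| apply Rabs_def2 in hy]; lra.
Qed.

Lemma deriv_nonneg_sign f f' x : deriv_nonneg f f' -> 0 <= x -> 0 < f' x ->
  exists d, 0 < d /\
    forall y, 0 <= y -> Rabs (y - x) < d -> y <> x -> 0 < (y - x) * (f y - f x).
Proof.
  intros Hd hx hpos.
  destruct (within_locally_R _ _ _ (filterlim_eventually_pos _ _ (Hd x hx) hpos))
    as [d [hd H]].
  exists d. split; [exact hd |]. intros y hy hyd hyx.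
  specialize (H y hyd (conj hy hyx)).
  replace ((y - x) * (f y - f x)) with ((f y - f x) / (y - x) * ((y - x) * (y - x)))
    by (field; lra).
  apply Rmult_lt_0_compat; [exact H |]. apply Rsqr_pos_lt. lra.
Qed.

Lemma MVT_closed (f f' : R -> R) a b :
  a <= b -> (forall x, a <= x <= b -> is_derive f x (f' x)) ->
  exists c, a <= c <= b /\ f b - f a = f' c * (b - a).
Proof.
  intros hab Hd.
  destruct (MVT_gen f a b f') as [c [hc E]];
    rewrite ?Rmin_left, ?Rmax_right in * by lra.
  - intros x hx. apply Hd. lra.
  - intros x hx. apply derivable_continuous_pt. exists (f' x).
    apply is_derive_Reals, Hd. lra.
  - exists c. split; [exact hc | exact E].
Qed.

Lemma deriv_lb_le (f f' : R -> R) a b m :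
  a <= b -> (forall x, a <= x <= b -> is_derive f x (f' x)) ->
  (forall x, a <= x <= b -> m <= f' x) -> f a + m * (b - a) <= f b.
Proof.
  intros hab Hd Hm. destruct (MVT_closed f f' a b hab Hd) as [c [hc E]].
  assert (m * (b - a) <= f' c * (b - a)) by (apply Rmult_le_compat_r; [lra | auto]).
  lra.
Qed.

Lemma deriv_ub_le (f f' : R -> R) a b m :
  a <= b -> (forall x, a <= x <= b -> is_derive f x (f' x)) ->
  (forall x, a <= x <= b -> f' x <= m) -> f b <= f a + m * (b - a).
Proof.
  intros hab Hd Hm. destruct (MVT_closed f f' a b hab Hd) as [c [hc E]].
  assert (f' c * (b - a) <= m * (b - a)) by (apply Rmult_le_compat_r; [lra | auto]).
  lra.
Qed.

Lemma deriv_nonneg_lt_from0 f f' b : deriv_nonneg f f' -> 0 < b -> 0 < f' 0 ->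
  (forall x, 0 < x <= b -> 0 <= f' x) -> f 0 < f b.
Proof.
  intros Hd hb h0 Hnn.
  destruct (deriv_nonneg_sign f f' 0 Hd (Rle_refl 0) h0) as [d [hd Hs]].
  pose proof (Rmin_l (d / 2) b); pose proof (Rmin_r (d / 2) b).
  set (y := Rmin (d / 2) b) in *.
  assert (hy : 0 < y) by (apply Rmin_pos; lra).
  assert (Hy := Hs y (Rlt_le _ _ hy) ltac:(rewrite Rminus_0_r, Rabs_pos_eq; lra) ltac:(lra)).
  rewrite Rminus_0_r in Hy.
  assert (f y <= f b).
  { rewrite <- (Rplus_0_r (f y)), <- (Rmult_0_l (b - y)).
    apply (deriv_lb_le f f'); [lra | |];
      intros x hx; [apply deriv_nonneg_is_derive | apply Hnn]; auto; lra. }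
  assert (0 < f y - f 0) by (apply (Rmult_lt_reg_l y); lra).
  lra.
Qed.

Lemma continuity_pt_pos_nbhd g z : continuity_pt g z -> 0 < g z ->
  exists d, 0 < d /\ forall x, Rabs (x - z) < d -> 0 < g x.
Proof.
  intros Hc hz.
  destruct (filterlim_eventually_pos _ _ (proj1 (continuity_pt_filterlim _ _) Hc) hz)
    as [d Hd].
  exists d. split; [apply cond_pos | exact Hd].
Qed.

Lemma first_zero g a b : a <= b -> (forall x, a <= x <= b -> continuity_pt g x) ->
  0 < g a -> g b <= 0 ->
  exists z, a < z <= b /\ g z = 0 /\ forall y, a <= y < z -> 0 < g y.
Proof.
  intros hab Hc ha hb.
  set (E := fun x => a <= x <= b /\ forall y, a <= y <= x -> 0 < g y).
  assert (HEa : E a) by (split; [lra | intros y hy; replace y with a by lra; exact ha]).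
  destruct (completeness E) as [z [Hub Hlub]];
    [exists b; intros x [hx _]; lra | exists a; exact HEa |].
  assert (haz : a <= z) by (apply Hub, HEa).
  assert (hzb : z <= b) by (apply Hlub; intros x [hx _]; lra).
  assert (Hbelow : forall y, a <= y < z -> 0 < g y).
  { intros y hy. destruct (Rlt_le_dec 0 (g y)) as [h | h]; [exact h | exfalso].
    assert (z <= y); [| lra].
    apply Hlub. intros x [hx Hx]. destruct (Rle_lt_dec x y) as [h1 | h1]; [exact h1 |].
    assert (0 < g y) by (apply Hx; lra). lra. }
  assert (hgz_le : g z <= 0).
  { destruct (Rle_lt_dec (g z) 0) as [h | h]; [exact h | exfalso].
    destruct (continuity_pt_pos_nbhd g z (Hc z ltac:(lra)) h) as [d [hd Hd]].
    assert (hzb' : z < b) by (destruct (Req_dec z b); [subst; lra | lra]).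
    pose proof (Rmin_l b (z + d / 2)); pose proof (Rmin_r b (z + d / 2)).
    set (w := Rmin b (z + d / 2)) in *.
    assert (hzw : z < w) by (apply Rmin_glb_lt; lra).
    assert (E w); [| assert (w <= z) by (apply Hub; assumption); lra].
    split; [lra |]. intros t ht. destruct (Rlt_le_dec t z).
    - apply Hbelow. lra.
    - apply Hd. apply Rabs_def1; lra. }
  assert (hgz_ge : 0 <= g z).
  { destruct (Rle_lt_dec 0 (g z)) as [h | h]; [exact h | exfalso].
    destruct (continuity_pt_pos_nbhd (fun x => - g x) z
      (continuity_pt_opp _ _ (Hc z ltac:(lra))) ltac:(lra)) as [d [hd Hd]].
    assert (hza : a < z) by (destruct (Req_dec a z); [subst; lra | lra]).
    pose proof (Rmax_l a (z - d / 2)); pose proof (Rmax_r a (z - d / 2)).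
    set (w := Rmax a (z - d / 2)) in *.
    assert (hwz : w < z) by (apply Rmax_lub_lt; lra).
    assert (0 < g w) by (apply Hbelow; lra).
    assert (0 < - g w) by (apply Hd, Rabs_def1; lra). lra. }
  exists z. split; [| split; [lra | exact Hbelow]].
  split; [| exact hzb]. destruct (Req_dec a z); [subst; lra | lra].
Qed.

Lemma bounded_above_near_sup (f : R -> R) x0 M delta :
  (forall x, x0 <= x -> f x <= M) -> 0 < delta ->
  exists t, x0 <= t /\ forall x, x0 <= x -> f x < f t + delta.
Proof.
  intros HM hdelta.
  set (E := fun y => exists x, x0 <= x /\ y = f x).
  destruct (completeness E) as [L [Hub Hlub]].
  - exists M. intros y [x [hx ->]]. auto.
  - exists (f x0), x0. split; [lra | reflexivity].
  - destruct (classic (exists t, x0 <= t /\ L - delta < f t)) as [[t [ht Ht]] | Hn].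
    + exists t. split; [exact ht |]. intros x hx.
      assert (f x <= L) by (apply Hub; exists x; auto). lra.
    + assert (L <= L - delta); [| lra].
      apply Hlub. intros y [x [hx ->]].
      destruct (Rle_lt_dec (f x) (L - delta)) as [h | h]; [exact h |].
      exfalso. apply Hn. exists x. auto.
Qed.

Lemma lipschitz_nonneg_linear_growth f : lipschitz_nonneg f ->
  exists S, 0 < S /\ forall x, 1 <= x -> Rabs (f x) <= S * x.
Proof.
  intros [L HL]. exists (Rabs (f 0) + Rabs L + 1). split.
  - pose proof (Rabs_pos (f 0)); pose proof (Rabs_pos L). lra.
  - intros x hx. specialize (HL x 0 ltac:(lra) (Rle_refl 0)).
    rewrite Rminus_0_r, (Rabs_pos_eq x) in HL by lra.
    pose proof (Rabs_triang_inv (f x) (f 0)).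
    assert (L * x <= Rabs L * x) by (apply Rmult_le_compat_r; [lra | apply Rle_abs]).
    assert (Rabs (f 0) <= Rabs (f 0) * x) by (pose proof (Rabs_pos (f 0)); nra).
    lra.
Qed.

Lemma unbounded_of_deriv_ge_inv (f f' : R -> R) X k : 0 < X -> 0 < k ->
  (forall x, X <= x -> is_derive f x (f' x)) -> (forall x, X <= x -> k / x <= f' x) ->
  forall M, exists x, X <= x /\ M <= f x.
Proof.
  intros hX hk Hd Hlb M.
  pose proof (Rmax_l 0 ((M - f X) / k)) as hA; pose proof (Rmax_r 0 ((M - f X) / k)).
  set (A := Rmax 0 ((M - f X) / k)) in *.
  assert (hMA : M - f X <= k * A).
  { replace (M - f X) with (k * ((M - f X) / k)) by (field; lra).
    apply Rmult_le_compat_l; lra. }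
  exists (X * exp A).
  assert (hx : X <= X * exp A) by (pose proof (exp_ineq1_le A); nra).
  split; [exact hx |].
  assert (Hlog : f X - k * ln X + 0 * (X * exp A - X) <= f (X * exp A) - k * ln (X * exp A)).
  { apply (deriv_lb_le (fun s => f s - k * ln s) (fun s => f' s - k * / s)); [exact hx | |].
    - intros s hs. apply (is_derive_minus f (fun s => k * ln s)); [apply Hd; lra |].
      apply is_derive_scal, is_derive_ln. lra.
    - intros s hs. specialize (Hlb s ltac:(lra)). unfold Rdiv in Hlb. lra. }
  rewrite ln_mult, ln_exp in Hlog by (try apply exp_pos; lra).
  lra.
Qed.

Lemma is_lim_seq_div_superlinear (f : R -> R) :
  (forall M, 0 < M -> exists X, forall x, X <= x -> M * x <= f x) ->
  is_lim_seq (fun n => INR n / f (INR n)) 0.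
Proof.
  intros Hsup. apply is_lim_seq_spec. intros eps.
  assert (heps := cond_pos eps).
  destruct (Hsup (2 / eps)) as [X HX]; [apply Rdiv_lt_0_compat; lra |].
  destruct (nfloor_ex (Rmax X 1)) as [N hN]; [pose proof (Rmax_r X 1); lra |].
  exists (S N). intros n hn. apply le_INR in hn. rewrite S_INR in hn.
  pose proof (Rmax_l X 1); pose proof (Rmax_r X 1).
  assert (hf := HX (INR n) ltac:(lra)).
  assert (hpos : 0 < 2 / eps * INR n)
    by (apply Rmult_lt_0_compat; [apply Rdiv_lt_0_compat |]; lra).
  rewrite Rminus_0_r, Rabs_pos_eq by (apply Rdiv_le_0_compat; lra).
  apply (Rmult_lt_reg_r (f (INR n))); [lra |].
  unfold Rdiv at 1. rewrite Rmult_assoc, Rinv_l, Rmult_1_r by lra.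
  assert (Hscaled : eps * (2 / eps * INR n) <= eps * f (INR n))
    by (apply Rmult_le_compat_l; lra).
  replace (eps * (2 / eps * INR n)) with (2 * INR n) in Hscaled by (field; lra).
  lra.
Qed.

Section IncreasingSolution.

Variables (r : R) (mu sigma psi dpsi ddpsi : R -> R).
Hypothesis hr : 0 < r.
Hypothesis hsigpos : forall x, 0 <= x -> 0 < sigma x.
Hypothesis Hpsi : deriv_nonneg psi dpsi.
Hypothesis Hdpsi : deriv_nonneg dpsi ddpsi.
Hypothesis Hddpsi : cont_nonneg ddpsi.
Hypothesis hode : forall x, 0 <= x ->
  (sigma x ^ 2 / 2) * ddpsi x + mu x * dpsi x = r * psi x.
Hypothesis hd0 : dpsi 0 = 1.
Hypothesis h0 : psi 0 = 0.

Definition gap x := r * psi x - mu x * dpsi x.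

Lemma ddpsi_eq x : 0 <= x -> ddpsi x = gap x * (2 / sigma x ^ 2).
Proof. intros hx. unfold gap. rewrite <- (hode x hx). pose proof (hsigpos x hx). field. lra. Qed.

Lemma ode_weight_pos x : 0 <= x -> 0 < 2 / sigma x ^ 2.
Proof. intros hx. pose proof (hsigpos x hx). apply Rdiv_lt_0_compat; [lra | nra]. Qed.

Lemma dpsi_pos_near0 : exists d, 0 < d /\ forall x, 0 <= x < d -> 0 < dpsi x.
Proof.
  assert (Hc := deriv_nonneg_cont _ _ Hdpsi 0 (Rle_refl 0)). rewrite hd0 in Hc.
  destruct (within_locally_R _ _ _ (filterlim_eventually_pos _ _ Hc Rlt_0_1)) as [d [hd H]].
  exists d. split; [exact hd |]. intros x hx.
  apply H; [rewrite Rminus_0_r, Rabs_pos_eq |]; lra.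
Qed.

Lemma dpsi_pos x : 0 <= x -> 0 < dpsi x.
Proof.
  intros hx. destruct (Rlt_le_dec 0 (dpsi x)) as [h | h]; [exact h | exfalso].
  assert (hx0 : 0 < x) by (destruct (Req_dec x 0) as [-> | ]; lra).
  destruct dpsi_pos_near0 as [d [hd Hnear]].
  pose proof (Rmin_l (d / 2) (x / 2)); pose proof (Rmin_r (d / 2) (x / 2)).
  set (a := Rmin (d / 2) (x / 2)) in *.
  assert (ha : 0 < a) by (apply Rmin_pos; lra).
  destruct (first_zero dpsi a x) as [z [hz [hdz Hbefore]]];
    [lra | | apply Hnear; lra | exact h |].
  { intros y hy. apply cont_nonneg_continuity_pt; [apply (deriv_nonneg_cont _ _ Hdpsi) | lra]. }
  assert (Hpos_z : forall y, 0 <= y < z -> 0 < dpsi y).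
  { intros y hy. destruct (Rlt_le_dec y a); [apply Hnear | apply Hbefore]; lra. }
  assert (hpsiz : 0 < psi z).
  { rewrite <- h0. apply (deriv_nonneg_lt_from0 psi dpsi); [exact Hpsi | lra | lra |].
    intros y hy. destruct (Req_dec y z) as [-> | ]; [lra |]. left; apply Hpos_z; lra. }
  assert (hddz : 0 < ddpsi z).
  { rewrite ddpsi_eq by lra. unfold gap. rewrite hdz, Rmult_0_r, Rminus_0_r.
    apply Rmult_lt_0_compat; [nra | apply ode_weight_pos; lra]. }
  destruct (deriv_nonneg_sign dpsi ddpsi z Hdpsi ltac:(lra) hddz) as [d' [hd' Hsign]].
  pose proof (Rmax_l a (z - d' / 2)); pose proof (Rmax_r a (z - d' / 2)).
  set (w := Rmax a (z - d' / 2)) in *.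
  assert (hwz : w < z) by (apply Rmax_lub_lt; lra).
  assert (Hw := Hsign w ltac:(lra) ltac:(apply Rabs_def1; lra) ltac:(lra)).
  assert (hdw := Hpos_z w ltac:(lra)).
  rewrite hdz, Rminus_0_r in Hw. nra.
Qed.

Lemma psi_pos x : 0 < x -> 0 < psi x.
Proof.
  intros hx. rewrite <- h0. apply (deriv_nonneg_lt_from0 psi dpsi); [exact Hpsi | exact hx | |].
  - rewrite hd0. lra.
  - intros y hy. left. apply dpsi_pos. lra.
Qed.

Lemma dpsi_nondecreasing x0 s t : 0 < x0 -> (forall x, x0 <= x -> 0 <= ddpsi x) ->
  x0 <= s <= t -> dpsi s <= dpsi t.
Proof.
  intros hx0 Hconv hst. rewrite <- (Rplus_0_r (dpsi s)), <- (Rmult_0_l (t - s)).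
  apply (deriv_lb_le dpsi ddpsi); [lra | |];
    intros x hx; [apply deriv_nonneg_is_derive | apply Hconv]; auto; lra.
Qed.

Variables (kappa c : R).
Hypothesis hkappa : 0 < kappa.
Hypothesis hc : 0 < c.
Hypothesis hdec : forall x y, kappa <= x -> x < y ->
  mu y - (r - c) * y < mu x - (r - c) * x.

Lemma mu_slope_lt y z : kappa <= y -> kappa <= z -> y <> z ->
  (y - z) * (mu y - mu z) < (r - c) * ((y - z) * (y - z)).
Proof.
  intros hy hz hyz. destruct (Rlt_or_le y z) as [h | h].
  - specialize (hdec y z hy h). nra.
  - specialize (hdec z y hz ltac:(lra)). nra.
Qed.

Lemma ddpsi_crossing z : kappa <= z -> ddpsi z = 0 ->
  exists d, 0 < d /\
    forall y, kappa <= y -> Rabs (y - z) < d -> y <> z -> 0 < (y - z) * ddpsi y.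
Proof.
  intros hz hdz.
  set (q1 := fun y => (psi y - psi z) / (y - z)).
  set (q2 := fun y => (dpsi y - dpsi z) / (y - z)).
  set (Q := fun y => r * q1 y - (r - c) * dpsi y - mu z * q2 y).
  (* [(y - z) Q y] bounds [gap y - gap z] from below since [mu] grows slower than
     [(r - c) x] on [[kappa, oo)], and [Q] tends to [c dpsi z > 0]. *)
  assert (Hlim : filterlim Q (within (fun y => 0 <= y /\ y <> z) (locally z))
                   (locally (r * dpsi z - (r - c) * dpsi z - mu z * ddpsi z))).
  { repeat apply filterlim_Rminus; apply filterlim_Rmult; try apply filterlim_const.
    - apply Hpsi. lra.
    - apply (filterlim_filter_le_1 _ (F := within (fun y => 0 <= y) (locally z))).
      + intros P [d Hd]. exists d. intros y hy [hy0 _]. auto.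
      + apply (deriv_nonneg_cont _ _ Hdpsi). lra.
    - apply Hdpsi. lra. }
  assert (hpz := dpsi_pos z ltac:(lra)).
  rewrite hdz, Rmult_0_r, Rminus_0_r in Hlim.
  replace (r * dpsi z - (r - c) * dpsi z) with (c * dpsi z) in Hlim by ring.
  destruct (within_locally_R _ _ _ (filterlim_eventually_pos _ _ Hlim ltac:(nra)))
    as [d [hd HQ]].
  exists d. split; [exact hd |]. intros y hy hyd hyz.
  specialize (HQ y hyd ltac:(split; lra)).
  assert (hgz : gap z = 0).
  { specialize (hode z ltac:(lra)). rewrite hdz in hode. unfold gap. lra. }
  assert (Hquot : (y - z) * ((y - z) * Q y) < (y - z) * gap y).
  { assert (EQ : (y - z) * ((y - z) * Q y) = (y - z) * gap y - gap z * (y - z)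
      - ((r - c) * ((y - z) * (y - z)) - (y - z) * (mu y - mu z)) * dpsi y)
      by (unfold gap, Q, q1, q2; field; lra).
    assert (0 < ((r - c) * ((y - z) * (y - z)) - (y - z) * (mu y - mu z)) * dpsi y).
    { apply Rmult_lt_0_compat; [| apply dpsi_pos; lra].
      pose proof (mu_slope_lt y z hy hz hyz). lra. }
    rewrite EQ, hgz. lra. }
  assert (0 < (y - z) * gap y).
  { eapply Rle_lt_trans; [| exact Hquot].
    replace ((y - z) * ((y - z) * Q y)) with (((y - z) * (y - z)) * Q y) by ring.
    left. apply Rmult_lt_0_compat; [apply Rsqr_pos_lt; lra | exact HQ]. }
  rewrite ddpsi_eq, <- Rmult_assoc by lra.
  apply Rmult_lt_0_compat; [assumption | apply ode_weight_pos; lra].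
Qed.

Lemma ddpsi_pos_of_pos a y : kappa <= a -> a < y -> 0 < ddpsi a -> 0 < ddpsi y.
Proof.
  intros ha hay hda. destruct (Rlt_le_dec 0 (ddpsi y)) as [h | h]; [exact h | exfalso].
  destruct (first_zero ddpsi a y) as [z [hz [hdz Hbefore]]]; [lra | | exact hda | exact h |].
  { intros x hx. apply cont_nonneg_continuity_pt; [exact Hddpsi | lra]. }
  destruct (ddpsi_crossing z ltac:(lra) hdz) as [d [hd Hcross]].
  pose proof (Rmax_l a (z - d / 2)); pose proof (Rmax_r a (z - d / 2)).
  set (w := Rmax a (z - d / 2)) in *.
  assert (hwz : w < z) by (apply Rmax_lub_lt; lra).
  assert (Hw := Hcross w ltac:(lra) ltac:(apply Rabs_def1; lra) ltac:(lra)).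
  assert (hdw := Hbefore w ltac:(lra)).
  nra.
Qed.

Lemma ddpsi_pos_after a y : kappa <= a -> a < y -> 0 <= ddpsi a -> 0 < ddpsi y.
Proof.
  intros ha hay [hda | hda]; [exact (ddpsi_pos_of_pos a y ha hay hda) |].
  destruct (ddpsi_crossing a ha (eq_sym hda)) as [d [hd Hcross]].
  pose proof (Rmin_l (a + d / 2) ((a + y) / 2)); pose proof (Rmin_r (a + d / 2) ((a + y) / 2)).
  set (w := Rmin (a + d / 2) ((a + y) / 2)) in *.
  assert (haw : a < w) by (apply Rmin_glb_lt; lra).
  assert (Hw := Hcross w ltac:(lra) ltac:(apply Rabs_def1; lra) ltac:(lra)).
  apply (ddpsi_pos_of_pos w y); [lra | lra | nra].
Qed.

Lemma ddpsi_nonneg_somewhere : exists x, kappa <= x /\ 0 <= ddpsi x.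
Proof.
  apply NNPP. intros Hn.
  assert (Hconc : forall t, kappa <= t -> ddpsi t < 0).
  { intros t ht. apply Rnot_le_lt. intros h. apply Hn. exists t. auto. }
  set (x := kappa + Rabs (mu kappa) / c + 1).
  assert (hcx : c * (x - kappa) = Rabs (mu kappa) + c) by (unfold x; field; lra).
  assert (hx : kappa < x) by (pose proof (Rabs_pos (mu kappa)); nra).
  assert (Hdec : forall s, kappa <= s <= x -> dpsi x <= dpsi s).
  { intros s hs. rewrite <- (Rplus_0_r (dpsi s)), <- (Rmult_0_l (x - s)).
    apply (deriv_ub_le dpsi ddpsi); [lra | |]; intros t ht.
    - apply deriv_nonneg_is_derive; [exact Hdpsi | lra].
    - left. apply Hconc. lra. }
  assert (Htangent : psi kappa + dpsi x * (x - kappa) <= psi x).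
  { apply (deriv_lb_le psi dpsi); [lra | | exact Hdec].
    intros t ht. apply deriv_nonneg_is_derive; [exact Hpsi | lra]. }
  assert (Hmu : mu x < mu kappa + (r - c) * (x - kappa))
    by (specialize (hdec kappa x ltac:(lra) hx); lra).
  assert (hpx := dpsi_pos x ltac:(lra)).
  assert (hpk := psi_pos kappa hkappa).
  assert (mu x * dpsi x < (mu kappa + (r - c) * (x - kappa)) * dpsi x)
    by (apply Rmult_lt_compat_r; assumption).
  assert (0 < dpsi x * (c * (x - kappa) - mu kappa))
    by (apply Rmult_lt_0_compat; [exact hpx | pose proof (Rle_abs (mu kappa)); lra]).
  assert (0 < ddpsi x); [| specialize (Hconc x ltac:(lra)); lra].
  rewrite ddpsi_eq by lra. unfold gap.
  apply Rmult_lt_0_compat; [nra | apply ode_weight_pos; lra].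
Qed.

Lemma inflection_point : exists! b1 : R, kappa <= b1 /\
  (forall x, kappa < x < b1 -> ddpsi x < 0) /\ (forall x, b1 < x -> 0 < ddpsi x).
Proof.
  assert (Hex : exists b1, kappa <= b1 /\
    (forall x, kappa < x < b1 -> ddpsi x < 0) /\ (forall x, b1 < x -> 0 < ddpsi x)).
  { destruct (Rle_lt_dec 0 (ddpsi kappa)) as [h | h].
    - exists kappa. split; [lra | split; [intros; lra |]].
      intros x hx. apply (ddpsi_pos_after kappa); lra.
    - destruct ddpsi_nonneg_somewhere as [x1 [hx1 hdx1]].
      destruct (first_zero (fun t => - ddpsi t) kappa x1) as [z [hz [hdz Hbefore]]];
        [lra | | lra | lra |].
      { intros x hx. apply continuity_pt_opp, cont_nonneg_continuity_pt; [exact Hddpsi | lra]. }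
      exists z. split; [lra | split].
      + intros x hx. specialize (Hbefore x ltac:(lra)). lra.
      + intros x hx. apply (ddpsi_pos_after z); lra. }
  destruct Hex as [b1 Hb1]. exists b1. split; [exact Hb1 |].
  intros b2 Hb2. destruct Hb1 as [hb1 [Hneg1 Hpos1]], Hb2 as [hb2 [Hneg2 Hpos2]].
  set (m := (b1 + b2) / 2).
  destruct (Rtotal_order b1 b2) as [h | [h | h]]; [exfalso | exact h | exfalso].
  - specialize (Hpos1 m ltac:(unfold m; lra)). specialize (Hneg2 m ltac:(unfold m; lra)). lra.
  - specialize (Hpos2 m ltac:(unfold m; lra)). specialize (Hneg1 m ltac:(unfold m; lra)). lra.
Qed.

Lemma gap_ge_tangent t x : kappa <= t <= x ->
  (forall s, t <= s <= x -> dpsi t <= dpsi s) ->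
  r * psi t - mu t * dpsi x + (x - t) * (c * dpsi x - r * (dpsi x - dpsi t)) <= gap x.
Proof.
  intros htx Hmono.
  assert (Htangent : psi t + dpsi t * (x - t) <= psi x).
  { apply (deriv_lb_le psi dpsi); [lra | | exact Hmono].
    intros s hs. apply deriv_nonneg_is_derive; [exact Hpsi | lra]. }
  assert (Hmu : mu x <= mu t + (r - c) * (x - t)).
  { destruct (Req_dec t x) as [-> | hne]; [lra |].
    specialize (hdec t x ltac:(lra) ltac:(lra)). lra. }
  assert (mu x * dpsi x <= (mu t + (r - c) * (x - t)) * dpsi x).
  { apply Rmult_le_compat_r; [left; apply dpsi_pos; lra | exact Hmu]. }
  assert (r * (psi t + dpsi t * (x - t)) <= r * psi x) by (apply Rmult_le_compat_l; lra).
  unfold gap. lra.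
Qed.

Lemma gap_linear_lb x0 M : kappa <= x0 -> (forall x, x0 <= x -> 0 <= ddpsi x) ->
  (forall x, x0 <= x -> dpsi x <= M) ->
  exists k X, 0 < k /\ 1 <= X /\ x0 <= X /\
    forall x, X <= x -> k * x <= gap x.
Proof.
  intros hx0 Hconv HM.
  assert (Hmono : forall s t, x0 <= s <= t -> dpsi s <= dpsi t)
    by (intros s t hst; apply (dpsi_nondecreasing x0); [lra | exact Hconv | exact hst]).
  assert (hp0 := dpsi_pos x0 ltac:(lra)).
  (* Beyond a point [t] where [dpsi] is [delta]-close to its supremum, [gap] grows at
     rate at least [c dpsi x0 / 2]. *)
  set (delta := c * dpsi x0 / (2 * r)).
  assert (hdelta : 0 < delta) by (unfold delta; apply Rdiv_lt_0_compat; nra).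
  destruct (bounded_above_near_sup dpsi x0 M delta HM hdelta) as [t [ht Hflat]].
  set (k := c * dpsi x0 / 4).
  assert (hk : 0 < k) by (unfold k; nra).
  assert (hMt : 0 <= Rabs (mu t) * M / k).
  { apply Rdiv_le_0_compat; [apply Rmult_le_pos; [apply Rabs_pos |] | exact hk].
    specialize (HM x0 (Rle_refl _)). lra. }
  pose proof (Rmax_l 1 (2 * t + Rabs (mu t) * M / k)).
  pose proof (Rmax_r 1 (2 * t + Rabs (mu t) * M / k)).
  exists k, (Rmax 1 (2 * t + Rabs (mu t) * M / k)).
  split; [exact hk | split; [lra | split; [lra |]]].
  intros x hx.
  assert (Hgap := gap_ge_tangent t x ltac:(lra) ltac:(intros s hs; apply Hmono; lra)).
  assert (Hslope : 2 * k <= c * dpsi x - r * (dpsi x - dpsi t)).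
  { assert (dpsi x0 <= dpsi x) by (apply Hmono; lra).
    assert (r * (dpsi x - dpsi t) <= r * delta)
      by (apply Rmult_le_compat_l; [lra | specialize (Hflat x ltac:(lra)); lra]).
    assert (r * delta = c * dpsi x0 / 2) by (unfold delta; field; lra).
    unfold k. nra. }
  assert ((x - t) * (2 * k) <= (x - t) * (c * dpsi x - r * (dpsi x - dpsi t)))
    by (apply Rmult_le_compat_l; lra).
  assert (mu t * dpsi x <= Rabs (mu t) * M).
  { apply Rle_trans with (Rabs (mu t) * dpsi x).
    - apply Rmult_le_compat_r; [left; apply dpsi_pos; lra | apply Rle_abs].
    - apply Rmult_le_compat_l; [apply Rabs_pos | apply HM; lra]. }
  assert (k * (2 * t + Rabs (mu t) * M / k) = 2 * k * t + Rabs (mu t) * M) by (field; lra).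
  assert (k * (2 * t + Rabs (mu t) * M / k) <= k * x) by (apply Rmult_le_compat_l; lra).
  assert (0 < psi t) by (apply psi_pos; lra).
  nra.
Qed.

Hypothesis hsig : lipschitz_nonneg sigma.

Lemma ddpsi_ge_inv k X : 0 < k -> 1 <= X ->
  (forall x, X <= x -> k * x <= gap x) ->
  exists k', 0 < k' /\ forall x, X <= x -> k' / x <= ddpsi x.
Proof.
  intros hk hX Hgap.
  destruct (lipschitz_nonneg_linear_growth sigma hsig) as [S [hS HS]].
  exists (2 * k / S ^ 2). split; [apply Rdiv_lt_0_compat; [lra | nra] |].
  intros x hx.
  assert (hs := hsigpos x ltac:(lra)).
  assert (hsx : sigma x <= S * x) by (rewrite <- (Rabs_pos_eq (sigma x)) by lra; apply HS; lra).
  assert (Hw : 2 / (S * x) ^ 2 <= 2 / sigma x ^ 2).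
  { apply Rmult_le_compat_l; [lra |]. apply Rinv_le_contravar; [nra |].
    apply pow_incr. lra. }
  replace (2 * k / S ^ 2 / x) with (k * x * (2 / (S * x) ^ 2)) by (field; lra).
  rewrite ddpsi_eq by lra.
  apply Rle_trans with (k * x * (2 / sigma x ^ 2)).
  - apply Rmult_le_compat_l; [nra | exact Hw].
  - apply Rmult_le_compat_r; [left; apply ode_weight_pos; lra | apply Hgap; lra].
Qed.

Lemma dpsi_unbounded x0 : kappa <= x0 -> (forall x, x0 <= x -> 0 <= ddpsi x) ->
  forall M, exists x, x0 <= x /\ M <= dpsi x.
Proof.
  intros hx0 Hconv M. apply NNPP. intros Hn.
  assert (HM : forall x, x0 <= x -> dpsi x <= M).
  { intros x hx. apply Rnot_lt_le. intros h. apply Hn. exists x. split; [exact hx | lra]. }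
  destruct (gap_linear_lb x0 M hx0 Hconv HM) as [k [X [hk [hX [hXx0 Hgap]]]]].
  destruct (ddpsi_ge_inv k X hk hX Hgap) as [k' [hk' Hinv]].
  destruct (unbounded_of_deriv_ge_inv dpsi ddpsi X k' ltac:(lra) hk'
    ltac:(intros x hx; apply deriv_nonneg_is_derive; [exact Hdpsi | lra]) Hinv (M + 1))
    as [x [hx hMx]].
  specialize (HM x ltac:(lra)). lra.
Qed.

Lemma psi_superlinear x0 : kappa <= x0 -> (forall x, x0 <= x -> 0 <= ddpsi x) ->
  forall M, 0 < M -> exists X, forall x, X <= x -> M * x <= psi x.
Proof.
  intros hx0 Hconv M hM.
  destruct (dpsi_unbounded x0 hx0 Hconv (2 * M)) as [X [hX hMX]].
  exists (2 * X). intros x hx.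
  assert (Htangent : psi X + dpsi X * (x - X) <= psi x).
  { apply (deriv_lb_le psi dpsi); [lra | |]; intros s hs.
    - apply deriv_nonneg_is_derive; [exact Hpsi | lra].
    - apply (dpsi_nondecreasing x0); [lra | exact Hconv | lra]. }
  assert (0 < psi X) by (apply psi_pos; lra).
  assert (2 * M * (x - X) <= dpsi X * (x - X)) by (apply Rmult_le_compat_r; lra).
  nra.
Qed.

End IncreasingSolution.

Theorem lemmaA1 (r : R) (mu sigma : R -> R) (kappa c : R)
  (psi dpsi ddpsi : R -> R)
  (hr : 0 < r)
  (hmu : lipschitz_nonneg mu)
  (hsig : lipschitz_nonneg sigma)
  (hsigpos : forall x, 0 <= x -> 0 < sigma x)
  (hkappa : 0 < kappa) (hc : 0 < c)
  (hdec : forall x y, kappa <= x -> x < y ->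
            mu y - (r - c) * y < mu x - (r - c) * x)
  (hC2 : C2_nonneg psi dpsi ddpsi)
  (hode : forall x, 0 <= x ->
            (sigma x ^ 2 / 2) * ddpsi x + mu x * dpsi x = r * psi x)
  (hd0 : dpsi 0 = 1) (h0 : psi 0 = 0) :
  (forall x, 0 <= x -> 0 < dpsi x) /\
  (exists! b1 : R, kappa <= b1 /\
     (forall x, kappa < x < b1 -> ddpsi x < 0) /\
     (forall x, b1 < x -> 0 < ddpsi x)) /\
  is_lim_seq (fun n : nat => INR n / psi (INR n)) 0.
Proof.
  destruct hC2 as [Hpsi [Hdpsi Hddpsi]].
  assert (Hinfl : exists! b1 : R, kappa <= b1 /\
     (forall x, kappa < x < b1 -> ddpsi x < 0) /\ (forall x, b1 < x -> 0 < ddpsi x))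
    by (apply (inflection_point r mu sigma psi dpsi ddpsi) with (c := c); assumption).
  split; [| split; [exact Hinfl |]].
  - apply (dpsi_pos r mu sigma psi dpsi ddpsi); assumption.
  - destruct Hinfl as [b1 [[hb1 [_ Hconvex]] _]].
    apply is_lim_seq_div_superlinear.
    apply (psi_superlinear r mu sigma psi dpsi ddpsi) with kappa c (b1 + 1); try assumption.
    + lra.
    + intros x hx. left. apply Hconvex. lra.
Qed.
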